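(* Let $\mathfrak X$ be a separable Banach space and let $(\Omega,\mathcal F,\mu)$ be a measure space with $\mu$ a positive finite measure. Let $X:\Omega\to\mathcal K(\mathfrak X)$ be an integrably bounded random closed set, and let $a\in\mathfrak X$. Then \[ \int_\Omega X\,d\mu=\{a\} \] holds if and only if there exists $x\in L^1[\Omega;\mathfrak X]$ such that $X(\omega)=\{x(\omega)\}$ for $\mu$-a.e. $\omega$ and $\int_\Omega x\,d\mu=a$.
   Context: $\mathcal K(\mathfrak X)$ denotes the nonempty closed subsets of $\mathfrak X$. A random closed set $X$ is an (Effros-)measurable map $\Omega\to\mathcal K(\mathfrak X)$. It is integrably bounded, written $X\in L^1[\Omega;\mathcal K(\mathfrak X)]$, if $\omega\mapsto\sup\{\|y\|:y\in X(\omega)\}$ is $\mu$-integrable. $S_X$ denotes the set of integrable selections of $X$, i.e. those $x\in L^1[\Omega;\mathfrak X]$ with $x(\omega)\in X(\omega)$ for $\mu$-a.e. $\omega$. The Aumann integral is $\int_\Omega X\,d\mu=\{\int_\Omega x\,d\mu : x\in S_X\}$, where the integrals are Bochner integrals. *)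

From HB Require Import structures.
From mathcomp Require Import all_boot all_order all_algebra.
From mathcomp Require Import all_classical all_reals all_analysis.
Set Implicit Arguments. Unset Strict Implicit. Unset Printing Implicit Defensive.
Import Order.TTheory GRing.Theory Num.Theory.
Import numFieldNormedType.Exports.
Local Open Scope classical_set_scope.
Local Open Scope ring_scope.

Section Defs.
Context {R : realType} {d : measure_display} {T : measurableType d}.
Context {V : completeNormedModType R}.

Definition separable_space : Prop :=
  exists D : set V, countable D /\ dense D.

(** mu-simple functions, given by a finite representation
    [:: (v_1, A_1); ...; (v_k, A_k)] with A_i measurable of finite measure:
    the function  w |-> \sum_i 1_{A_i}(w) v_i. *)
Definition simple_rep (mu : {measure set T -> \bar R}) (l : seq (V * set T)) :=
  forall p, p \in l -> measurable p.2 /\ (mu p.2 < +oo)%E.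

Definition simple_fun (l : seq (V * set T)) : T -> V :=
  fun w => \sum_(p <- l) ((\1_(p.2) w : R) *: p.1).

Definition simple_int (mu : {measure set T -> \bar R}) (l : seq (V * set T)) : V :=
  \sum_(p <- l) (fine (mu p.2) *: p.1).

Definition strongly_measurable (mu : {measure set T -> \bar R}) (f : T -> V) :=
  exists s : nat -> seq (V * set T), (forall n, simple_rep mu (s n)) /\
    {ae mu, forall w, (fun n => simple_fun (s n) w) @ \oo --> f w}.

Definition bochner (mu : {measure set T -> \bar R}) (f : T -> V) (a : V) :=
  strongly_measurable mu f /\
  exists s : nat -> seq (V * set T), (forall n, simple_rep mu (s n)) /\
    (fun n => (\int[mu]_(w in setT) (`|f w - simple_fun (s n) w|)%:E)%E)
      @ \oo --> 0%E /\
    (fun n => simple_int mu (s n)) @ \oo --> a.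

Definition L1 (mu : {measure set T -> \bar R}) (f : T -> V) :=
  exists a, bochner mu f a.

Definition random_closed_set (X : T -> set V) :=
  (forall w, X w !=set0 /\ closed (X w)) /\
  (forall U : set V, open U -> measurable [set w | X w `&` U !=set0]).

Definition integrably_bounded (mu : {measure set T -> \bar R}) (X : T -> set V) :=
  mu.-integrable setT
    (fun w => ereal_sup [set (`|y|)%:E | y in X w]).

Definition selections (mu : {measure set T -> \bar R}) (X : T -> set V) :=
  [set x : T -> V | L1 mu x /\ {ae mu, forall w, X w (x w)}].

Definition aumann (mu : {measure set T -> \bar R}) (X : T -> set V) : set V :=
  [set a | exists2 x, selections mu X x & bochner mu x a].

End Defs.

From HB Require Import structures.
From mathcomp Require Import all_boot all_order all_algebra.
From mathcomp Require Import all_classical all_reals all_analysis.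
From mathcomp Require Import measurable_realfun lra.
Set Implicit Arguments. Unset Strict Implicit. Unset Printing Implicit Defensive.
Import Order.TTheory GRing.Theory Num.Theory.
Import numFieldNormedType.Exports.
Local Open Scope classical_set_scope.
Local Open Scope ring_scope.

(* If [X w = {x w}] a.e., every integrable selection equals [x] a.e., so the
   Aumann integral is the singleton of the integral of [x].  Conversely, let
   [x] be an integrable selection, with integral [a].  For measurable [A] and
   any integrable selection [y], gluing [y] on [A] with [x] off [A] gives a
   selection whose integral must also be [a]; hence [y] and [x] have the same
   integral over every [A], and [y = x] a.e. (tested on the sets where
   [y - x] is close to a point of a dense sequence).  Applied to
   Kuratowski--Ryll-Nardzewski selections of [X] that prefer a given ball
   (integrable since [X] is integrably bounded), this shows that a.e. [x w]
   lies in the closure of every ball of a countable base meeting [X w], which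
   forces [X w = {x w}]. *)

Section simple_functions.
Context {R : realType} {V : completeNormedModType R} {d : measure_display}.
Context {T : measurableType d}.
Variable mu : {finite_measure set T -> \bar R}.
Implicit Types (l : seq (V * set T)) (A : set T) (w : T).

Definition measurable_rep l := forall p, p \in l -> measurable p.2.

Lemma measurable_rep_simple l : measurable_rep l -> simple_rep mu l.
Proof. by move=> ml p /ml mp; split => //; rewrite ltey_eq fin_num_measure. Qed.

Lemma simple_rep_measurable l : simple_rep mu l -> measurable_rep l.
Proof. by move=> sl p /sl[]. Qed.

Definition opp_rep l := [seq (- p.1, p.2) | p <- l].
Definition restrict_rep A l := [seq (p.1, p.2 `&` A) | p <- l].

Lemma measurable_rep_cat l1 l2 :
  measurable_rep l1 -> measurable_rep l2 -> measurable_rep (l1 ++ l2).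
Proof. by move=> h1 h2 p; rewrite mem_cat => /orP[/h1|/h2]. Qed.

Lemma measurable_rep_opp l : measurable_rep l -> measurable_rep (opp_rep l).
Proof. by move=> ml p /mapP[q /ml mq ->]. Qed.

Lemma measurable_rep_restrict A l :
  measurable A -> measurable_rep l -> measurable_rep (restrict_rep A l).
Proof. by move=> mA ml p /mapP[q /ml mq ->]; exact: measurableI. Qed.

Lemma simple_fun_nil w : simple_fun [::] w = 0 :> V.
Proof. by rewrite /simple_fun big_nil. Qed.

Lemma simple_fun_cons p l w :
  simple_fun (p :: l) w = (\1_(p.2) w : R) *: p.1 + simple_fun l w.
Proof. by rewrite /simple_fun big_cons. Qed.

Lemma simple_fun_cat l1 l2 w :
  simple_fun (l1 ++ l2) w = simple_fun l1 w + simple_fun l2 w.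
Proof. by rewrite /simple_fun big_cat. Qed.

Lemma simple_fun_opp l w : simple_fun (opp_rep l) w = - simple_fun l w.
Proof.
by rewrite /simple_fun big_map -sumrN; apply: eq_bigr => p _; rewrite scalerN.
Qed.

Lemma simple_fun_restrict A l w :
  simple_fun (restrict_rep A l) w = (\1_A w : R) *: simple_fun l w.
Proof.
rewrite /simple_fun big_map scaler_sumr; apply: eq_bigr => p _ /=.
by rewrite indicI scalerA mulrC.
Qed.

Lemma simple_int_cons p l :
  simple_int mu (p :: l) = fine (mu p.2) *: p.1 + simple_int mu l.
Proof. by rewrite /simple_int big_cons. Qed.

Lemma simple_int_cat l1 l2 :
  simple_int mu (l1 ++ l2) = simple_int mu l1 + simple_int mu l2.
Proof. by rewrite /simple_int big_cat. Qed.

Lemma simple_int_opp l : simple_int mu (opp_rep l) = - simple_int mu l.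
Proof.
by rewrite /simple_int big_map -sumrN; apply: eq_bigr => p _; rewrite scalerN.
Qed.

(* Simple functions take finitely many values. *)
Lemma measurable_simple_fun_preimage l (P : set V) :
  measurable_rep l -> measurable [set w | P (simple_fun l w)].
Proof.
elim: l P => [|p l IH] P ml.
  have [P0|P0] := pselect (P 0).
    by rewrite (_ : [set w | _] = setT) // predeqE => w /=; rewrite simple_fun_nil.
  by rewrite (_ : [set w | _] = set0) // predeqE => w /=; rewrite simple_fun_nil.
have mp : measurable p.2 by apply: ml; rewrite mem_head.
have ml' : measurable_rep l by move=> q ql; apply: ml; rewrite in_cons ql orbT.
rewrite (_ : [set w | _] = (p.2 `&` [set w | P (p.1 + simple_fun l w)]) `|`
   (~` p.2 `&` [set w | P (simple_fun l w)])).
  apply: measurableU; apply: measurableI => //.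
  - exact: (IH (fun v => P (p.1 + v))).
  - exact: measurableC.
  - exact: IH.
apply/seteqP; split => w /=; rewrite simple_fun_cons indicE.
  case: (boolP (w \in p.2)) => h; rewrite ?scale1r ?scale0r ?add0r => Pw.
    by left; split => //; exact: set_mem.
  by right; split => // /mem_set; rewrite (negbTE h).
by case=> -[h Pw]; rewrite ?(mem_set h) ?scale1r // memNset // scale0r add0r.
Qed.

Lemma measurable_fun_simple_fun l (g : V -> R) :
  measurable_rep l -> measurable_fun setT (g \o simple_fun l).
Proof.
move=> ml _ Y mY; rewrite setTI.
exact: (measurable_simple_fun_preimage (fun v => Y (g v))).
Qed.

End simple_functions.

Section simple_limit.
Context {R : realType} {V : completeNormedModType R} {d : measure_display}.
Context {T : measurableType d}.
Implicit Types (f g : T -> V) (A : set T).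

Definition simple_limit f := exists s : nat -> seq (V * set T),
  (forall n, measurable_rep (s n)) /\
  forall w, (fun n => simple_fun (s n) w) @ \oo --> f w.

Lemma simple_limit_simple_fun l : measurable_rep l -> simple_limit (simple_fun l).
Proof. by move=> ml; exists (fun=> l); split => // w; exact: cvg_cst. Qed.

Lemma simple_limit_cst (v : V) : simple_limit (fun=> v).
Proof.
exists (fun=> [:: (v, setT)]); split; first by move=> n p; rewrite inE => /eqP -> /=.
move=> w; apply: cvg_near_cst; apply: nearW => n.
by rewrite simple_fun_cons simple_fun_nil addr0 indicE mem_set // scale1r.
Qed.

Lemma simple_limitD f g : simple_limit f -> simple_limit g ->
  simple_limit (fun w => f w + g w).
Proof.
move=> [s [ms cs]] [t [mt ct]]; exists (fun n => s n ++ t n); split.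
  by move=> n; exact: measurable_rep_cat.
by move=> w; under eq_fun do rewrite simple_fun_cat; exact: cvgD.
Qed.

Lemma simple_limitN f : simple_limit f -> simple_limit (fun w => - f w).
Proof.
move=> [s [ms cs]]; exists (fun n => opp_rep (s n)); split.
  by move=> n; exact: measurable_rep_opp.
by move=> w; under eq_fun do rewrite simple_fun_opp; exact: cvgN.
Qed.

Lemma simple_limit_indic A f : measurable A -> simple_limit f ->
  simple_limit (fun w => (\1_A w : R) *: f w).
Proof.
move=> mA [s [ms cs]]; exists (fun n => restrict_rep A (s n)); split.
  by move=> n; exact: measurable_rep_restrict.
by move=> w; under eq_fun do rewrite simple_fun_restrict; exact: cvgZl_tmp.
Qed.

Lemma simple_limit_measurable_norm f :
  simple_limit f -> measurable_fun setT (fun w => `|f w|).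
Proof.
move=> [s [ms cs]].
apply: (@measurable_fun_cvg _ _ _ _ (fun n w => `|simple_fun (s n) w|)).
  by move=> n; exact: measurable_fun_simple_fun.
by move=> w _; exact: cvg_norm.
Qed.

Lemma simple_limit_measurable_dist f g : simple_limit f -> simple_limit g ->
  measurable_fun setT (fun w => (`|f w - g w|)%:E).
Proof.
move=> sf sg; apply/measurable_EFinP; apply: simple_limit_measurable_norm.
by apply: simple_limitD => //; exact: simple_limitN.
Qed.

End simple_limit.

Section nonnegative_integrals.
Context {R : realType} {d : measure_display} {T : measurableType d}.
Variable mu : {measure set T -> \bar R}.
Local Open Scope ereal_scope.

(* The integral of a nonnegative function is a supremum over the simple
   functions below it, so no measurability is needed here. *)
Lemma ge0_le_integral_nomeas (f g : T -> \bar R) :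
  (forall w, 0 <= f w) -> (forall w, f w <= g w) ->
  \int[mu]_w f w <= \int[mu]_w g w.
Proof.
move=> f0 fg; have g0 w : 0 <= g w by exact: le_trans (f0 w) (fg w).
rewrite (ge0_integralTE mu f0) (ge0_integralTE mu g0) /=.
apply: ereal_sup_le => _ [h hf <-]; exists h => //= w.
exact: le_trans (hf w) (fg w).
Qed.

Lemma ge0_ae_eq_integral_nomeas (f h : T -> \bar R) :
  (forall w, 0 <= f w) -> (forall w, 0 <= h w) -> measurable_fun setT h ->
  {ae mu, forall w, f w = h w} -> \int[mu]_w f w = \int[mu]_w h w.
Proof.
move=> f0 h0 mh [N [mN N0 sub]].
have fh w : ~ N w -> f w = h w.
  by move=> Nw; apply: contrapT => fhw; apply: Nw; apply: sub.
(* sandwich f between h off N and h + oo on N, both a.e. equal to h *)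
pose h1 := h \_ (~` N).
pose h2 := fun w => h w + ((cst +oo) \_ N) w.
have mh1 : measurable_fun setT h1.
  apply/(measurable_restrictT _ (measurableC mN)).1.
  exact: (measurable_funS measurableT).
have mh2 : measurable_fun setT h2.
  apply: emeasurable_funD => //.
  by apply/(measurable_restrictT _ mN).1; exact: measurable_cst.
have ae1 : ae_eq mu setT h h1.
  exists N; split => // w /= hw; apply: contrapT => Nw; apply: hw => _.
  by rewrite /h1 patchE mem_set.
have ae2 : ae_eq mu setT h h2.
  exists N; split => // w /= hw; apply: contrapT => Nw; apply: hw => _.
  by rewrite /h2 patchE memNset // adde0.
apply/eqP; rewrite eq_le; apply/andP; split.
  rewrite [X in _ <= X](ae_eq_integral h2) //.
  apply: ge0_le_integral_nomeas => // w; rewrite /h2 patchE.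
  case: ifPn => [/set_mem Nw|/negP Nw].
    by rewrite addey ?leey // gt_eqF // (lt_le_trans _ (h0 w)) // ltNy0.
  by rewrite adde0 fh //; apply: contra_not Nw => /mem_set.
rewrite [X in X <= _](ae_eq_integral h1) //.
apply: ge0_le_integral_nomeas => // w; first by rewrite /h1 patchE; case: ifPn.
by rewrite /h1 patchE; case: ifPn => [/set_mem /fh ->|_].
Qed.

Lemma ge0_le_integralD (f g h : T -> R) :
  measurable_fun setT f -> measurable_fun setT g -> measurable_fun setT h ->
  (forall w, 0 <= f w)%R -> (forall w, 0 <= g w)%R -> (forall w, 0 <= h w)%R ->
  (forall w, f w <= g w + h w)%R ->
  \int[mu]_w (f w)%:E <= \int[mu]_w (g w)%:E + \int[mu]_w (h w)%:E.
Proof.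
move=> mf mg mh f0 g0 h0 fgh.
have mgE : measurable_fun setT (EFin \o g) by exact/measurable_EFinP.
have mhE : measurable_fun setT (EFin \o h) by exact/measurable_EFinP.
rewrite -ge0_integralD //; [|by move=> w _; rewrite lee_fin..].
apply: ge0_le_integral => //.
- by move=> w _; rewrite lee_fin.
- exact/measurable_EFinP.
- exact: emeasurable_funD.
- by move=> w _; rewrite -EFinD lee_fin.
Qed.

End nonnegative_integrals.

Section simple_int_norm.
Context {R : realType} {V : completeNormedModType R} {d : measure_display}.
Context {T : measurableType d}.
Variable mu : {finite_measure set T -> \bar R}.
Implicit Types (l : seq (V * set T)) (A B : set T).

Lemma fine_measure_setID A B : measurable A -> measurable B ->
  fine (mu B) = fine (mu (B `&` A)) + fine (mu (B `\` A)).
Proof.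
move=> mA mB; have mBA := measurableI _ _ mB mA; have mBnA := measurableD mB mA.
rewrite -fineD ?fin_num_measure // -measureU //; first by rewrite setUIDK.
by rewrite setDE setIACA setICr setI0.
Qed.

Lemma simple_int_restrict_setID l A B : measurable_rep l ->
  measurable A -> measurable B ->
  simple_int mu (restrict_rep B l) =
  simple_int mu (restrict_rep (B `&` A) l) + simple_int mu (restrict_rep (B `\` A) l).
Proof.
move=> ml mA mB; rewrite /simple_int !big_map -big_split /=.
rewrite big_seq [RHS]big_seq; apply: eq_bigr => q ql.
rewrite -scalerDl (fine_measure_setID mA (measurableI _ _ (ml q ql) mB)).
by rewrite setIA !setDE setIA.
Qed.

(* The extra shift [v] and domain [B] make the induction on the
   representation go through: the head pair (u, A) splits [B] into [B `&` A],
   where the shift becomes [v + u], and [B `\` A], where it stays [v]. *)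
Lemma norm_shift_simple_int_le l B (v : V) : measurable_rep l -> measurable B ->
  ((`|fine (mu B) *: v + simple_int mu (restrict_rep B l)|)%:E
    <= \int[mu]_(w in B) (`|v + simple_fun l w|)%:E)%E.
Proof.
elim: l B v => [|[u A] l IH] B v ml mB.
  rewrite /simple_int /= big_nil addr0.
  under eq_integral do rewrite simple_fun_nil addr0.
  rewrite integral_cst // normrZ ger0_norm ?fine_ge0 ?measure_ge0 //.
  by rewrite EFinM fineK ?fin_num_measure // muleC.
have mA : measurable A := ml (u, A) (mem_head _ _).
have ml' : measurable_rep l by move=> q ql; apply: ml; rewrite in_cons ql orbT.
have mBA := measurableI _ _ mB mA; have mBnA := measurableD mB mA.
have -> : fine (mu B) *: v + simple_int mu (restrict_rep B ((u, A) :: l)) =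
   (fine (mu (B `&` A)) *: (v + u) + simple_int mu (restrict_rep (B `&` A) l)) +
   (fine (mu (B `\` A)) *: v + simple_int mu (restrict_rep (B `\` A) l)).
  rewrite /= simple_int_cons /= (simple_int_restrict_setID ml' mA mB).
  rewrite (fine_measure_setID mA mB) (setIC A B) scalerDl scalerDr -!addrA.
  by congr (_ + _); rewrite !(addrCA (fine (mu (B `\` A)) *: v)).
apply: (le_trans (y := ((`|fine (mu (B `&` A)) *: (v + u) +
    simple_int mu (restrict_rep (B `&` A) l)|)%:E +
  (`|fine (mu (B `\` A)) *: v + simple_int mu (restrict_rep (B `\` A) l)|)%:E)%E)).
  by rewrite -EFinD lee_fin ler_normD.
have mf : measurable_fun ((B `&` A) `|` (B `\` A))
    (fun w => (`|v + simple_fun ((u, A) :: l) w|)%:E).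
  apply: (measurable_funS measurableT) => //; apply/measurable_EFinP.
  exact: (measurable_fun_simple_fun (fun x => `|v + x|) ml).
rewrite [X in (_ <= integral _ X _)%E](_ : B = (B `&` A) `|` (B `\` A)); last first.
  by rewrite setUIDK.
rewrite ge0_integral_setU //; last by rewrite setDE /disj_set setIACA setICr setI0.
apply: leeD.
  apply: (le_trans (IH _ _ ml' mBA)); rewrite le_eqVlt; apply/orP; left.
  apply/eqP/eq_integral => w; rewrite inE => -[_ Aw].
  by rewrite simple_fun_cons indicE mem_set //= scale1r addrA.
apply: (le_trans (IH _ _ ml' mBnA)); rewrite le_eqVlt; apply/orP; left.
apply/eqP/eq_integral => w; rewrite inE => -[_ Aw].
by rewrite simple_fun_cons indicE memNset // scale0r add0r.
Qed.

Lemma norm_simple_int_le l : measurable_rep l ->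
  ((`|simple_int mu l|)%:E <= \int[mu]_w (`|simple_fun l w|)%:E)%E.
Proof.
move=> ml; have := norm_shift_simple_int_le 0 ml measurableT.
rewrite scaler0 add0r.
have -> : restrict_rep setT l = l.
  by rewrite /restrict_rep; under eq_map do rewrite setIT; rewrite map_id_in // => -[].
by under eq_integral do rewrite add0r.
Qed.

Lemma dist_simple_int_le l l' : measurable_rep l -> measurable_rep l' ->
  ((`|simple_int mu l - simple_int mu l'|)%:E
    <= \int[mu]_w (`|simple_fun l w - simple_fun l' w|)%:E)%E.
Proof.
move=> ml ml'; have := norm_simple_int_le (measurable_rep_cat ml (measurable_rep_opp ml')).
rewrite simple_int_cat simple_int_opp.
by under eq_integral do rewrite simple_fun_cat simple_fun_opp.
Qed.

End simple_int_norm.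

Section sbochner.
Context {R : realType} {V : completeNormedModType R} {d : measure_display}.
Context {T : measurableType d}.
Variable mu : {finite_measure set T -> \bar R}.
Implicit Types (f g : T -> V) (l : seq (V * set T)) (A : set T) (a b : V).

Definition l1_error f l := (\int[mu]_w (`|f w - simple_fun l w|)%:E)%E.

(* [bochner] with an everywhere limit of simple functions: this keeps
   [w |-> |f w - s w|] measurable, which the estimates below need. *)
Definition sbochner f a := simple_limit f /\ exists s : nat -> seq (V * set T),
  [/\ forall n, measurable_rep (s n), (fun n => l1_error f (s n)) @ \oo --> 0%E
    & (fun n => simple_int mu (s n)) @ \oo --> a].

Lemma l1_error_ge0 f l : (0 <= l1_error f l)%E.
Proof. by apply: integral_ge0 => w _; rewrite lee_fin. Qed.

Lemma cvge0_lt (x : nat -> \bar R) : x @ \oo --> 0%E ->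
  forall e : R, 0 < e -> \forall n \near \oo, (x n < e%:E)%E.
Proof.
move=> /fine_cvgP[fx cx] e e0; have ltx := cvgr0_norm_lt _ cx _ e0.
near=> n.
have fn : x n \is a fin_num by near: n; exact: fx.
have : `|(fine \o x) n| < e by near: n; exact: ltx.
by rewrite -(fineK fn) lte_fin /=; exact: le_lt_trans (ler_norm _).
Unshelve. all: by end_near. Qed.

Lemma squeeze_cvge0 (x y : nat -> \bar R) : (forall n, 0 <= x n)%E ->
  (forall n, x n <= y n)%E -> y @ \oo --> 0%E -> x @ \oo --> 0%E.
Proof.
move=> x0 xy cy; apply: (@squeeze_cvge _ _ _ _ (cst 0%E) _ y) => //.
  by apply: nearW => n; rewrite x0 xy.
exact: cvg_cst.
Qed.

Lemma dist_simple_int_lt f l l' (e1 e2 : R) : simple_limit f ->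
  measurable_rep l -> measurable_rep l' ->
  (l1_error f l < e1%:E)%E -> (l1_error f l' < e2%:E)%E ->
  `|simple_int mu l - simple_int mu l'| < e1 + e2.
Proof.
move=> sf ml ml' lt1 lt2; rewrite -lte_fin.
apply: le_lt_trans (dist_simple_int_le mu ml ml') _.
have sl := simple_limit_simple_fun ml; have sl' := simple_limit_simple_fun ml'.
apply: le_lt_trans (_ : (_ <= l1_error f l + l1_error f l')%E) _; last first.
  by rewrite EFinD; exact: lteD.
apply: ge0_le_integralD => //; try exact/measurable_EFinP/simple_limit_measurable_dist.
move=> w; rewrite (le_trans (ler_distD (f w) _ _)) //.
by rewrite distrC.
Qed.

Lemma sbochner_unique f a b : sbochner f a -> sbochner f b -> a = b.
Proof.
move=> [sf [s [ms Is cs]]] [_ [t [mt It ct]]].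
apply/eqP; rewrite -subr_eq0 -normr_eq0; apply/eqP; apply: contrapT => /eqP ab.
have e0 : 0 < `|a - b| / 4 by rewrite divr_gt0 // lt_def ab normr_ge0.
have h1 := cvge0_lt Is e0; have h2 := cvge0_lt It e0.
have h3 := (iffLR (cvgrPdist_lt _ _) cs) _ e0.
have h4 := (iffLR (cvgrPdist_lt _ _) ct) _ e0.
near \oo => n.
have k1 : (l1_error f (s n) < (`|a - b| / 4)%:E)%E by near: n; exact: h1.
have k2 : (l1_error f (t n) < (`|a - b| / 4)%:E)%E by near: n; exact: h2.
have k3 : `|a - simple_int mu (s n)| < `|a - b| / 4 by near: n; exact: h3.
have k4 : `|b - simple_int mu (t n)| < `|a - b| / 4 by near: n; exact: h4.
have := dist_simple_int_lt sf (ms n) (mt n) k1 k2.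
have : `|a - b| <= `|a - simple_int mu (s n)| +
    `|simple_int mu (s n) - simple_int mu (t n)| + `|b - simple_int mu (t n)|.
  rewrite (le_trans (ler_distD (simple_int mu (s n)) _ _)) // -addrA lerD2l.
  by rewrite (le_trans (ler_distD (simple_int mu (t n)) _ _)) // [`|_ - b|]distrC.
move: k3 k4; set x := `|a - b|; lra.
Unshelve. all: by end_near. Qed.

Lemma sbochner_cauchy f (s : nat -> seq (V * set T)) : simple_limit f ->
  (forall n, measurable_rep (s n)) -> (fun n => l1_error f (s n)) @ \oo --> 0%E ->
  exists a, sbochner f a.
Proof.
move=> sf ms Is.
have : cvg ((fun n => simple_int mu (s n)) @ \oo).
  apply: cauchy_cvg; apply: cauchy_exP => e e0.
  have [N _ HN] := cvge0_lt Is (divr_gt0 e0 (ltr0Sn _ 1)).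
  exists (simple_int mu (s N)); exists N => // n /= Nn.
  rewrite -ball_normE /= (splitr e).
  by apply: (dist_simple_int_lt sf (ms N) (ms n)); apply: HN => /=.
by move=> cvgs; exists (lim ((fun n => simple_int mu (s n)) @ \oo)); split => //; exists s.
Qed.

Lemma sbochnerD f g a b : sbochner f a -> sbochner g b ->
  sbochner (fun w => f w + g w) (a + b).
Proof.
move=> [sf [s [ms Is cs]]] [sg [t [mt It ct]]].
split; first exact: simple_limitD.
exists (fun n => s n ++ t n); split; first by move=> n; exact: measurable_rep_cat.
  have Ist : (fun n => l1_error f (s n) + l1_error g (t n))%E @ \oo --> 0%E.
    by rewrite -(adde0 0%E); exact: cvgeD.
  apply: squeeze_cvge0 Ist => n; first exact: l1_error_ge0.
  have sst := simple_limit_simple_fun (measurable_rep_cat (ms n) (mt n)).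
  have ss := simple_limit_simple_fun (ms n); have st := simple_limit_simple_fun (mt n).
  have sfg := simple_limitD sf sg.
  apply: ge0_le_integralD => //; try exact/measurable_EFinP/simple_limit_measurable_dist.
  by move=> w; rewrite simple_fun_cat opprD addrACA ler_normD.
by under eq_fun do rewrite simple_int_cat; exact: cvgD.
Qed.

Lemma sbochnerN f a : sbochner f a -> sbochner (fun w => - f w) (- a).
Proof.
move=> [sf [s [ms Is cs]]]; split; first exact: simple_limitN.
exists (fun n => opp_rep (s n)); split; first by move=> n; exact: measurable_rep_opp.
  suff -> : (fun n => l1_error (fun w => - f w) (opp_rep (s n))) =
            (fun n => l1_error f (s n)) by [].
  apply: funext => n; apply: eq_integral => w _.
  by rewrite simple_fun_opp -opprD normrN.
by under eq_fun do rewrite simple_int_opp; exact: cvgN.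
Qed.

Lemma sbochner_indic A f a : measurable A -> sbochner f a ->
  exists c, sbochner (fun w => (\1_A w : R) *: f w) c.
Proof.
move=> mA [sf [s [ms Is cs]]].
have msA n := measurable_rep_restrict mA (ms n).
apply: (sbochner_cauchy _ msA); first exact: simple_limit_indic.
apply: (squeeze_cvge0 _ _ Is) => n; first exact: l1_error_ge0.
apply: ge0_le_integral => //.
- apply: simple_limit_measurable_dist; first exact: simple_limit_indic.
  exact: simple_limit_simple_fun.
- exact/simple_limit_measurable_dist/simple_limit_simple_fun.
move=> w _; rewrite lee_fin simple_fun_restrict -scalerBr normrZ indicE.
by case: (_ \in _); rewrite ?normr1 ?normr0 ?mul1r ?mul0r.
Qed.

Lemma sbochner_indic_cst A (v : V) : measurable A ->
  sbochner (fun w => (\1_A w : R) *: v) (fine (mu A) *: v).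
Proof.
move=> mA; have mvA : measurable_rep [:: (v, A)] by move=> p; rewrite inE => /eqP ->.
have -> : (fun w => (\1_A w : R) *: v) = simple_fun [:: (v, A)].
  by apply: funext => w; rewrite simple_fun_cons simple_fun_nil addr0.
split; first exact: simple_limit_simple_fun.
exists (fun=> [:: (v, A)]); split => //.
  suff -> : (fun _ : nat => l1_error (simple_fun [:: (v, A)]) [:: (v, A)]) = cst 0%E.
    exact: cvg_cst.
  by apply: funext => n; apply: integral0_eq => w _; rewrite subrr normr0.
by rewrite /simple_int big_cons big_nil addr0; exact: cvg_cst.
Qed.

Lemma norm_sbochner_le f a : sbochner f a ->
  ((`|a|)%:E <= \int[mu]_w (`|f w|)%:E)%E.
Proof.
move=> [sf [s [ms Is cs]]].
apply/lee_addgt0Pr => e e0; have e2 : 0 < e / 2 by rewrite divr_gt0.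
have h1 := cvge0_lt Is e2; have h2 := (iffLR (cvgrPdist_lt _ _) cs) _ e2.
near \oo => n.
have k1 : (l1_error f (s n) < (e / 2)%:E)%E by near: n; exact: h1.
have k2 : `|a - simple_int mu (s n)| < e / 2 by near: n; exact: h2.
have k3 : (\int[mu]_w (`|simple_fun (s n) w|)%:E <=
           \int[mu]_w (`|f w|)%:E + l1_error f (s n))%E.
  have ss := simple_limit_simple_fun (ms n).
  apply: ge0_le_integralD => //.
  - exact: simple_limit_measurable_norm.
  - exact: simple_limit_measurable_norm.
  - exact/measurable_EFinP/simple_limit_measurable_dist.
  by move=> w; rewrite -{1}(subKr (f w) (simple_fun (s n) w)) ler_normB.
have ka : `|a| <= `|simple_int mu (s n)| + e / 2.
  rewrite -(subrK (simple_int mu (s n)) a) (le_trans (ler_normD _ _)) //.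
  by rewrite addrC lerD2l ltW.
apply: (le_trans (y := ((`|simple_int mu (s n)|)%:E + (e / 2)%:E)%E)).
  by rewrite -EFinD lee_fin.
apply: (le_trans (y := (\int[mu]_w (`|f w|)%:E + l1_error f (s n) + (e / 2)%:E)%E)).
  by rewrite leeD2r //; exact: le_trans (norm_simple_int_le mu (ms n)) k3.
rewrite -addeA leeD2l // [in leRHS](splitr e) EFinD leeD2r //.
exact: ltW.
Unshelve. all: by end_near. Qed.

End sbochner.

Section bochner_sbochner.
Context {R : realType} {V : completeNormedModType R} {d : measure_display}.
Context {T : measurableType d}.
Variable mu : {finite_measure set T -> \bar R}.
Implicit Types (f g : T -> V) (a b : V).

Lemma strongly_measurable_ae_simple_limit f : strongly_measurable mu f ->
  exists g, simple_limit g /\ {ae mu, forall w, f w = g w}.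
Proof.
move=> [s [ms [N [mN N0 sub]]]].
have cN w : ~ N w -> (fun n => simple_fun (s n) w) @ \oo --> f w.
  by move=> Nw; apply: contrapT => h; apply: Nw; apply: sub.
exists (fun w => if w \in N then 0 else f w); split.
  exists (fun n => restrict_rep (~` N) (s n)); split.
    move=> n; apply: measurable_rep_restrict; first exact: measurableC.
    exact: simple_rep_measurable.
  move=> w; under eq_fun do rewrite simple_fun_restrict indicE.
  case: ifPn => [/set_mem Nw|/negP Nw].
    rewrite memNset; last by move=> /(_ Nw).
    under eq_fun do rewrite scale0r; exact: cvg_cst.
  rewrite mem_set; last by move=> /mem_set; exact: Nw.
  under eq_fun do rewrite scale1r; apply: cN => /mem_set; exact: Nw.
exists N; split => // w /= h; apply: contrapT => Nw; apply: h.
by rewrite memNset.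
Qed.

Lemma ae_simple_limit_strongly_measurable f g : simple_limit g ->
  {ae mu, forall w, f w = g w} -> strongly_measurable mu f.
Proof.
move=> [s [ms cs]] fg; exists s; split; first by move=> n; exact: measurable_rep_simple.
by apply: filterS fg => w ->.
Qed.

Lemma l1_error_ae f g l : simple_limit g -> measurable_rep l ->
  {ae mu, forall w, f w = g w} -> l1_error mu f l = l1_error mu g l.
Proof.
move=> sg ml fg; apply: ge0_ae_eq_integral_nomeas => //.
  exact/simple_limit_measurable_dist/simple_limit_simple_fun.
by apply: filterS fg => w ->.
Qed.

Lemma bochner_ae_sbochner f a : bochner mu f a ->
  exists g, {ae mu, forall w, f w = g w} /\ sbochner mu g a.
Proof.
move=> [smf [s [ms [Is cs]]]].
have [g [sg fg]] := strongly_measurable_ae_simple_limit smf.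
have ms' n := simple_rep_measurable (ms n).
exists g; split => //; split => //; exists s; split => //.
by under eq_fun do rewrite -(l1_error_ae sg (ms' _) fg).
Qed.

Lemma sbochner_ae_bochner f g a : {ae mu, forall w, f w = g w} ->
  sbochner mu g a -> bochner mu f a.
Proof.
move=> fg [sg [s [ms Is cs]]].
split; first exact: (ae_simple_limit_strongly_measurable sg).
exists s; split; first by move=> n; exact: measurable_rep_simple.
split => //.
suff -> : (fun n => l1_error mu f (s n)) = (fun n => l1_error mu g (s n)) by [].
by apply: funext => n; exact: l1_error_ae.
Qed.

Lemma sbochner_ae f g b : simple_limit f -> {ae mu, forall w, f w = g w} ->
  sbochner mu g b -> sbochner mu f b.
Proof.
move=> sf fg [sg [s [ms Is cs]]]; split => //; exists s; split => //.
by under eq_fun do rewrite (l1_error_ae sg (ms _) fg).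
Qed.

(* The errors [|y - s n|] are dominated by [h + |v0|]. *)
Lemma sbochner_dominated y (s : nat -> seq (V * set T)) (v0 : V) (h : T -> \bar R) :
  (forall n, measurable_rep (s n)) ->
  (forall w, (fun n => simple_fun (s n) w) @ \oo --> y w) ->
  (forall n w, `|y w - simple_fun (s n) w| <= `|y w - v0|) ->
  mu.-integrable setT h -> (forall w, ((`|y w|)%:E <= h w)%E) ->
  exists a, sbochner mu y a.
Proof.
move=> ms cs bs ih yh; have sy : simple_limit y by exists s.
apply: (sbochner_cauchy sy ms).
have := @dominated_convergence _ _ _ mu setT measurableT
  (fun n w => (`|y w - simple_fun (s n) w|)%:E) (cst 0%E) (fun w => h w + (`|v0|)%:E)%E.
case.
- by move=> n; apply: simple_limit_measurable_dist => //; exact: simple_limit_simple_fun.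
- exact: measurable_cst.
- apply: aeW => w _; apply: cvg_EFin; first exact: nearW.
  rewrite (_ : 0 = `|y w - y w|); last by rewrite subrr normr0.
  by apply: cvg_norm; apply: cvgB => //; exact: cvg_cst.
- by apply: integrableD => //; exact: finite_measure_integrable_cst.
- apply: aeW => w n _; rewrite gee0_abs ?lee_fin //.
  apply: (le_trans (y := ((`|y w|)%:E + (`|v0|)%:E)%E)).
    by rewrite -EFinD lee_fin (le_trans (bs n w)) // ler_normB.
  exact: leeD (yh w) (le_refl _).
move=> _ + _; rewrite /l1_error.
by under eq_fun do under eq_integral do rewrite sube0 gee0_abs ?lee_fin //.
Qed.

End bochner_sbochner.

Section real_comparison.
Context {R : realType} {d : measure_display} {T : measurableType d}.
Implicit Types f g : T -> R.

Lemma measurable_ler_set f g : measurable_fun setT f -> measurable_fun setT g ->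
  measurable [set w | f w <= g w].
Proof.
move=> mf mg; rewrite -[X in measurable X]setTI.
by apply: (measurable_fun_ler mf mg measurableT).
Qed.

Lemma measurable_ltr_set f g : measurable_fun setT f -> measurable_fun setT g ->
  measurable [set w | f w < g w].
Proof.
move=> mf mg; rewrite -[X in measurable X]setTI.
by apply: (measurable_fun_ltr mf mg measurableT).
Qed.

End real_comparison.

Definition dense_seq {R : realType} {V : normedModType R} (e : nat -> V) :=
  forall z (r : R), 0 < r -> exists n, `|z - e n| < r.

Lemma separable_dense_seq {R : realType} {V : completeNormedModType R} :
  separable_space (V := V) -> exists e : nat -> V, dense_seq e.
Proof.
move=> [D [/pfcard_geP[D0|[f]] dD]].
  have := dD setT; rewrite D0 setI0 => /(_ _ openT) [] //; by exists 0.
exists f => z r r0.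
have [y [bzy Dy]] := dD (ball z r) (ex_intro _ z (ballxx z r0)) (ball_open z r).
have [n _ fny] := @surj _ _ _ _ f _ Dy.
by exists n; rewrite fny; move: bzy; rewrite -ball_normE.
Qed.

Lemma exists_natSinv_lt {R : realType} (r : R) : 0 < r ->
  exists k : nat, k.+1%:R^-1 < r.
Proof.
move=> r0; exists (Num.Def.trunc r^-1).
by have := truncnS_gt r^-1; rewrite invf_plt ?posrE ?ltr0n.
Qed.

Section sbochner_indic0.
Context {R : realType} {V : completeNormedModType R} {d : measure_display}.
Context {T : measurableType d}.
Variable mu : {finite_measure set T -> \bar R}.
Variable g : T -> V.
Hypothesis sg : simple_limit g.
Hypothesis g_indic0 :
  forall A, measurable A -> sbochner mu (fun w => (\1_A w : R) *: g w) 0.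

Lemma sbochner_indic0_measure0 A (v : V) (r : R) : measurable A -> 0 <= r ->
  (forall w, A w -> `|g w - v| <= r) -> r < `|v| -> mu A = 0%E.
Proof.
move=> mA r0 gvr rv; have muA := fin_num_measure mu _ mA.
have : ((fine (mu A) * `|v|)%:E <= r%:E * mu A)%E.
  have vA := sbochner_indic_cst mu v mA.
  have := norm_sbochner_le (sbochnerD (g_indic0 mA) (sbochnerN vA)).
  rewrite add0r normrN normrZ ger0_norm ?fine_ge0 ?measure_ge0 // => /le_trans; apply.
  have -> : mu A = (\int[mu]_w (\1_A w)%:E)%E by rewrite integral_indic // setIT.
  have mIA : measurable_fun setT (fun w => (\1_A w : R)%:E).
    exact/measurable_EFinP/measurable_indic.
  rewrite -ge0_integralZl //; apply: ge0_le_integral => //.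
  - apply/measurable_EFinP/simple_limit_measurable_norm/simple_limitD.
      exact: simple_limit_indic.
    exact/simple_limitN/simple_limit_indic/simple_limit_cst.
  - exact: emeasurable_funM.
  move=> w _; rewrite -EFinM lee_fin -scalerBr normrZ indicE.
  case: (boolP (w \in A)) => [/set_mem Aw|_] /=; last by rewrite normr0 !mul0r mulr0.
  by rewrite normr1 !mul1r mulr1 gvr.
rewrite -[in leRHS](fineK muA) -EFinM lee_fin => le_muA.
suff : fine (mu A) = 0 by move=> muA0; rewrite -(fineK muA) muA0.
apply/eqP; rewrite eq_le fine_ge0 ?measure_ge0 // andbT.
have : fine (mu A) * (`|v| - r) <= 0 by rewrite mulrBr (mulrC _ r); lra.
by rewrite pmulr_lle0 // subr_gt0.
Qed.

(* [g w <> 0] is [r]-close to some [e j] with [r < |e j|], for [r] small. *)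
Lemma ae_eq0_sbochner_indic0 (e : nat -> V) : dense_seq e -> {ae mu, forall w, g w = 0}.
Proof.
move=> de; pose r k : R := k.+1%:R^-1.
have r0 k : 0 < r k by rewrite invr_gt0 ltr0n.
pose A j k := [set w | `|g w - e j| <= r k].
pose C j k := if r k < `|e j| then A j k else set0.
have nC : mu.-negligible (\bigcup_j \bigcup_k C j k).
  apply: negligible_bigcup => j; apply: negligible_bigcup => k.
  rewrite /C; case: ifPn => rk; last exact: negligible_set0.
  have mA : measurable (A j k).
    apply: measurable_ler_set; last exact: measurable_cst.
    apply: simple_limit_measurable_norm; apply: simple_limitD => //.
    exact: simple_limit_cst.
  exists (A j k); split => //.
  by apply: (sbochner_indic0_measure0 (v := e j) mA (ltW (r0 k))) => // w Aw; exact: Aw.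
apply: negligibleS nC => w /= gw.
have [k rk] : exists k, r k < `|g w| / 2.
  by apply: exists_natSinv_lt; rewrite divr_gt0 // normr_gt0; apply/eqP.
have [j gej] := de (g w) (r k) (r0 k).
exists j => //; exists k => //; rewrite /C ifT; first by rewrite /A /= ltW.
have : `|g w| <= `|g w - e j| + `|e j| by rewrite -{1}(subrK (e j) (g w)) ler_normD.
lra.
Qed.

End sbochner_indic0.

Section least_nat.
Context {R : realType} {d : measure_display} {T : measurableType d}.

(* [0] when [P] is never satisfied. *)
Definition least_nat (P : nat -> Prop) : nat :=
  match pselect (exists n, P n) with
  | left h => ex_minn (P := fun n => `[< P n >])
      (let: ex_intro n hn := h in ex_intro _ n (asboolT hn))
  | right _ => 0%N
  end.

Lemma least_natP (P : nat -> Prop) : (exists n, P n) ->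
  P (least_nat P) /\ forall m, P m -> (least_nat P <= m)%N.
Proof.
move=> h; rewrite /least_nat; case: pselect => // h'.
case: ex_minnP => m /asboolP Pm hm; split => // k Pk; apply: hm.
exact/asboolP.
Qed.

Lemma least_nat_eq (P : nat -> Prop) k : (exists n, P n) ->
  (least_nat P = k) <-> (P k /\ forall j, (j < k)%N -> ~ P j).
Proof.
move=> h; have [P1 P2] := least_natP h; split.
  move=> <-; split => // j jk Pj; have := P2 _ Pj; rewrite leqNgt jk //.
move=> [Pk Pj]; apply/eqP; rewrite eqn_leq P2 //=.
rewrite leqNgt; apply/negP => kP; exact: Pj _ kP P1.
Qed.

Lemma measurable_least_nat (P : nat -> T -> Prop) :
  (forall k, measurable [set w | P k w]) -> (forall w, exists n, P n w) ->
  forall k, measurable [set w | least_nat (P^~ w) = k].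
Proof.
move=> mP ex k.
rewrite (_ : [set w | _] = [set w | P k w] `&`
   \bigcap_j (if (j < k)%N then ~` [set w | P j w] else setT)).
  apply: measurableI => //; apply: bigcapT_measurable => j.
  by case: ifP => _ //; exact: measurableC.
apply/seteqP; split => w /=.
  move/(least_nat_eq k (ex w)) => [Pk Pj]; split => // j _.
  by case: ifPn => // jk; exact: Pj.
move=> [Pk Pj]; apply/(least_nat_eq k (ex w)); split => // j jk.
by have := Pj j I; rewrite jk.
Qed.

Lemma measurable_fun_comp_index (i : T -> nat) (h : nat -> R) :
  (forall m, measurable [set w | i w = m]) -> measurable_fun setT (h \o i).
Proof.
move=> mi _ Y mY; rewrite setTI.
rewrite (_ : _ @^-1` _ =
    \bigcup_m (if pselect (Y (h m)) then [set w | i w = m] else set0)).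
  by apply: bigcupT_measurable => m; case: pselect => ? /=; [exact: mi|].
apply/seteqP; split => w /=.
  by move=> Yw; exists (i w) => //; case: pselect => /=.
by move=> [m _]; case: pselect => /= [Ym ->|_ []].
Qed.

End least_nat.

Section dyad.
Context {R : realType}.

Definition dyad (n : nat) : R := (2 ^+ n)^-1.

Lemma dyad_gt0 n : 0 < dyad n.
Proof. by rewrite invr_gt0 exprn_gt0. Qed.

Lemma dyadS n : dyad n = 2 * dyad n.+1.
Proof. by rewrite /dyad exprS invfM mulrA mulfV ?mul1r. Qed.

Lemma dyad_lt (eps : R) : 0 < eps -> exists N, dyad N < eps.
Proof.
move=> eps0; have [k hk] := exists_natSinv_lt eps0; exists k.
apply: le_lt_trans hk; rewrite lef_pV2 ?posrE ?exprn_gt0 ?ltr0n //.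
by rewrite -natrX ler_nat; apply: ltn_expl.
Qed.

End dyad.

Section measurable_selection.
Context {R : realType} {V : completeNormedModType R} {d : measure_display}.
Context {T : measurableType d}.

Definition effros_measurable (Y : T -> set V) :=
  forall U : set V, open U -> measurable [set w | Y w `&` U !=set0].

Variable e : nat -> V.
Hypothesis de : dense_seq e.
Variable Y : T -> set V.
Hypothesis Yne : forall w, Y w !=set0.
Hypothesis Ymeas : effros_measurable Y.

(* Kuratowski--Ryll-Nardzewski: [center n w] is a point of [e] whose
   [dyad n]-ball meets [Y w], within [dyad n.-1] of the previous center; taking
   the least such index keeps [w |-> center_idx n w] measurable. *)
Fixpoint center_idx (n : nat) (w : T) : nat :=
  match n with
  | 0%N => least_nat (fun k => Y w `&` ball (e k) (dyad 0) !=set0)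
  | n'.+1 => least_nat (fun k => `|e k - e (center_idx n' w)| < dyad n' /\
                            Y w `&` ball (e k) (dyad n'.+1) !=set0)
  end.

Definition center n w := e (center_idx n w).

Lemma center0_ex w : exists k, Y w `&` ball (e k) (dyad 0) !=set0.
Proof.
have [z Yz] := Yne w; have [k hk] := de z (dyad_gt0 0).
by exists k, z; split => //; rewrite -ball_normE /= distrC.
Qed.

Lemma center_step n w : Y w `&` ball (center n w) (dyad n) !=set0 ->
  exists k, `|e k - center n w| < dyad n /\ Y w `&` ball (e k) (dyad n.+1) !=set0.
Proof.
move=> [z [Yz hz]]; rewrite -ball_normE /= in hz.
pose del := Num.min (dyad n.+1) (dyad n - `|center n w - z|).
have del0 : 0 < del by rewrite lt_min dyad_gt0 subr_gt0.
have [k hk] := de z del0.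
have h1 : `|z - e k| < dyad n.+1 by apply: lt_le_trans hk _; rewrite ge_min lexx.
have h2 : `|z - e k| < dyad n - `|center n w - z|.
  by apply: lt_le_trans hk _; rewrite ge_min lexx orbT.
exists k; split; last by exists z; split => //; rewrite -ball_normE /= distrC.
have : `|e k - center n w| <= `|e k - z| + `|z - center n w| by exact: ler_distD.
have E1 : `|e k - z| = `|z - e k| by rewrite distrC.
have E2 : `|z - center n w| = `|center n w - z| by rewrite distrC.
lra.
Qed.

Lemma center_ball_meet n w : Y w `&` ball (center n w) (dyad n) !=set0.
Proof.
elim: n => [|n IH]; first by have [] := least_natP (center0_ex w).
by have [] := least_natP (center_step IH); move=> [].
Qed.

Lemma dist_centerS n w : `|center n.+1 w - center n w| < dyad n.
Proof. by have [] := least_natP (center_step (center_ball_meet n w)); move=> []. Qed.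

Lemma dist_center_le n m w : (n <= m)%N ->
  `|center m w - center n w| <= 2 * dyad n - 2 * dyad m.
Proof.
elim: m => [|m IH].
  by rewrite leqn0 => /eqP ->; rewrite !subrr normr0.
rewrite leq_eqVlt => /orP[/eqP ->|]; first by rewrite !subrr normr0.
rewrite ltnS => /IH h.
have := dist_centerS m w; have := ler_distD (center m w) (center m.+1 w) (center n w).
have := @dyadS R m; lra.
Qed.

Definition sel w := lim (center ^~ w @ \oo).

Lemma center_cvg w : center ^~ w @ \oo --> sel w.
Proof.
apply: cauchy_cvg; apply: cauchy_exP => eps eps0.
have [N hN] := dyad_lt (divr_gt0 eps0 (ltr0Sn _ 1)).
exists (center N w); exists N => // n /= Nn; rewrite -ball_normE /=.
rewrite distrC (le_lt_trans (dist_center_le w Nn)) //.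
have := @dyad_gt0 R n; lra.
Qed.

Lemma dist_sel_center n w : `|sel w - center n w| <= 2 * dyad n.
Proof.
apply/ler_addgt0Pr => eps eps0.
have := (iffLR (cvgrPdist_lt _ _) (@center_cvg w)) _ eps0.
move=> [N _ HN].
have hm := HN (maxn N n) (leq_maxl _ _).
have := dist_center_le w (leq_maxr N n).
have := ler_distD (center (maxn N n) w) (sel w) (center n w).
have := @dyad_gt0 R (maxn N n).
move: hm => /=; lra.
Qed.

Lemma sel_closed w (C : set V) : closed C -> Y w `<=` C -> C (sel w).
Proof.
move=> cC YC; rewrite ((closure_id C).1 cC) => B /nbhs_ballP [eps eps0 hB].
have [n hn] := dyad_lt (divr_gt0 eps0 (ltr0Sn _ 2)).
have [z [Yz hz]] := center_ball_meet n w; rewrite -ball_normE /= in hz.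
exists z; split; first exact: YC.
apply: hB; rewrite -ball_normE /=.
have := ler_distD (center n w) (sel w) z; have := @dist_sel_center n w.
have := @dyad_gt0 R n; lra.
Qed.

Lemma measurable_center_idx n k : measurable [set w | center_idx n w = k].
Proof.
elim: n k => [|n IH] k.
  apply: (measurable_least_nat (P := fun k w => Y w `&` ball (e k) (dyad 0) !=set0)) => //.
    by move=> j; apply: Ymeas; exact: ball_open.
  exact: center0_ex.
apply: (measurable_least_nat (P := fun k w => `|e k - e (center_idx n w)| < dyad n /\
                            Y w `&` ball (e k) (dyad n.+1) !=set0)).
  move=> j; apply: measurableI; last by apply: Ymeas; exact: ball_open.
  apply: (@measurable_ltr_set _ _ _ (fun w => `|e j - e (center_idx n w)|) (cst (dyad n))).
    exact: (measurable_fun_comp_index (i := center_idx n) (fun m => `|e j - e m|)).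
  exact: measurable_cst.
by move=> w; exact: center_step (center_ball_meet n w).
Qed.

Definition dist_sel j w := `|sel w - e j|.

Lemma measurable_dist_sel j : measurable_fun setT (dist_sel j).
Proof.
apply: (@measurable_fun_cvg _ _ _ _ (fun n w => `|center n w - e j|)).
  move=> n; apply: (measurable_fun_comp_index (fun m => `|e m - e j|)).
  exact: measurable_center_idx.
by move=> w _; apply: cvg_norm; apply: cvgB => //; [exact: center_cvg|exact: cvg_cst].
Qed.

Fixpoint nearest_idx (n : nat) (w : T) : nat :=
  match n with
  | 0%N => 0%N
  | n'.+1 => if dist_sel n'.+1 w < dist_sel (nearest_idx n' w) w
             then n'.+1 else nearest_idx n' w
  end.

Lemma nearest_idx_le n w : (nearest_idx n w <= n)%N.
Proof. by elim: n => //= n IH; case: ifP => // _; exact: leqW. Qed.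

Lemma nearest_idx_min n w j : (j <= n)%N -> dist_sel (nearest_idx n w) w <= dist_sel j w.
Proof.
elim: n => [|n IH]; first by rewrite leqn0 => /eqP ->.
move=> jn /=; case: ifPn => h; rewrite leq_eqVlt in jn; case/orP: jn => [/eqP ->|] //.
- by rewrite ltnS => /IH; apply: le_trans; exact: ltW.
- by rewrite leNgt.
Qed.

Lemma measurable_nearest_idx n k : measurable [set w | nearest_idx n w = k].
Proof.
elim: n k => [|n IH] k.
  by case: k => [|k] /=; [rewrite (_ : [set _ | _] = setT) //; apply/seteqP; split|
    rewrite (_ : [set _ | _] = set0) //; apply/seteqP; split].
have mlt : forall m, measurable [set w | dist_sel n.+1 w < dist_sel m w].
  by move=> m; apply: measurable_ltr_set; exact: measurable_dist_sel.
rewrite (_ : [set w | _] = (if k == n.+1 then \bigcup_m ([set w | nearest_idx n w = m] `&`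
   [set w | dist_sel n.+1 w < dist_sel m w]) else set0) `|`
   ([set w | nearest_idx n w = k] `&` ~` [set w | dist_sel n.+1 w < dist_sel k w])).
  apply: measurableU; last by apply: measurableI => //; exact: measurableC.
  case: ifP => _ //; apply: bigcupT_measurable => m; exact: measurableI.
apply/seteqP; split => w /=.
  case: ifPn => h.
    by move=> <-; left; rewrite eqxx; exists (nearest_idx n w).
  move=> amk; right; split => //; rewrite -amk; exact/negP.
case=> [|[amk]].
  by case: eqP => // -> [m _ [/= <- h]]; rewrite h.
move=> hk; rewrite amk ifF //; exact/negP.
Qed.

(* Nearest-point approximation of [sel] by [e 0], ..., [e n]; having [e 0]
   as a candidate makes it dominated by [|sel w - e 0|]. *)
Definition sel_approx n : seq (V * set T) :=
  [seq (e j, [set w | nearest_idx n w = j]) | j <- iota 0 n.+1].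

Lemma measurable_rep_sel_approx n : measurable_rep (sel_approx n).
Proof. by move=> p /mapP[j _ ->]; exact: measurable_nearest_idx. Qed.

Lemma simple_fun_sel_approx n w : simple_fun (sel_approx n) w = e (nearest_idx n w).
Proof.
rewrite /simple_fun big_map.
rewrite (bigD1_seq (nearest_idx n w)) ?iota_uniq //; last first.
  by rewrite mem_iota add0n ltnS nearest_idx_le.
rewrite /= indicE mem_set // scale1r big1_seq ?addr0 // => j /andP[jn _].
by rewrite indicE memNset ?scale0r // => /= h; move: jn; rewrite h eqxx.
Qed.

Lemma sel_approx_cvg w : (fun n => simple_fun (sel_approx n) w) @ \oo --> sel w.
Proof.
apply/cvgrPdist_lt => eps eps0.
have [j hj] := de (sel w) eps0.
exists j => // n /= jn; rewrite simple_fun_sel_approx.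
exact: le_lt_trans (nearest_idx_min w jn) hj.
Qed.

Lemma dist_sel_approx_le n w : `|sel w - simple_fun (sel_approx n) w| <= `|sel w - e 0%N|.
Proof. by rewrite simple_fun_sel_approx; exact: (nearest_idx_min w (leq0n n)). Qed.

Lemma measurable_selection : exists (y : T -> V) (s : nat -> seq (V * set T)),
  [/\ forall n, measurable_rep (s n),
      forall w, (fun n => simple_fun (s n) w) @ \oo --> y w,
      forall n w, `|y w - simple_fun (s n) w| <= `|y w - e 0%N| &
      forall w (C : set V), closed C -> Y w `<=` C -> C (y w)].
Proof.
exists sel, sel_approx; split.
- exact: measurable_rep_sel_approx.
- exact: sel_approx_cvg.
- exact: dist_sel_approx_le.
- by move=> w C cC YC; apply: sel_closed.
Qed.

End measurable_selection.

Lemma scale_indic_setC {R : realType} {V : lmodType R} {T : Type} (A : set T)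
    (u v : V) (w : T) :
  (\1_A w : R) *: u + (\1_(~` A) w : R) *: v = if w \in A then u else v.
Proof.
rewrite !indicE; case: (boolP (w \in A)) => wA.
  have nA : w \notin ~` A by apply/negP => /set_mem; apply; exact: set_mem.
  by rewrite (negbTE nA) scale1r scale0r addr0.
have nA : w \in ~` A by apply: mem_set => /mem_set; exact/negP.
by rewrite nA scale1r scale0r add0r.
Qed.

Section aumann_singleton.
Context {R : realType} {V : completeNormedModType R} {d : measure_display}.
Context {T : measurableType d}.
Variable mu : {finite_measure set T -> \bar R}.
Variables (X : T -> set V) (a : V).

Lemma aumann_ae_singleton :
  (exists x : T -> V, L1 mu x /\ {ae mu, forall w, X w = [set x w]} /\ bochner mu x a) ->
  aumann mu X = [set a].
Proof.
move=> [x [_ [Xx xa]]]; apply/seteqP; split => [b [z [_ Xz] zb]|_ ->] /=.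
  have [z' [zz' z'b]] := bochner_ae_sbochner zb.
  have [x' [xx' x'a]] := bochner_ae_sbochner xa.
  have zx : {ae mu, forall w, z w = x w}.
    by move: Xz Xx; apply: filterS2 => w Xzw Xxw; move: Xzw; rewrite Xxw.
  have z'x : {ae mu, forall w, z' w = x w} by move: zz' zx; apply: filterS2 => w <-.
  have z'x' : {ae mu, forall w, z' w = x' w} by move: z'x xx'; apply: filterS2 => w ->.
  exact: sbochner_unique z'b (sbochner_ae z'b.1 z'x' x'a).
exists x => //; split => //; first by exists a.
by apply: filterS Xx => w ->.
Qed.

End aumann_singleton.

Section effros_trace.
Context {R : realType} {V : completeNormedModType R} {d : measure_display}.
Context {T : measurableType d}.
Variables (X : T -> set V) (G : set V).

Definition trace_or_self w := [set z | X w z /\ (X w `&` G !=set0 -> G z)].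

Lemma trace_or_self_neq0 w : X w !=set0 -> trace_or_self w !=set0.
Proof.
move=> [z0 Xz0]; have [[z [Xz Gz]]|XG0] := pselect (X w `&` G !=set0).
  by exists z; split.
by exists z0; split.
Qed.

Lemma effros_measurable_trace_or_self : open G -> effros_measurable X ->
  effros_measurable trace_or_self.
Proof.
move=> oG mX U oU.
rewrite (_ : [set w | _] = [set w | X w `&` (G `&` U) !=set0] `|`
    (~` [set w | X w `&` G !=set0] `&` [set w | X w `&` U !=set0])).
  apply: measurableU; first exact/mX/openI.
  by apply: measurableI; [exact/measurableC/mX|exact: mX].
apply/seteqP; split => w /=.
  move=> [z [[Xz XGz] Uz]]; have [XG|XG0] := pselect (X w `&` G !=set0).
    by left; exists z; split => //; split => //; exact: XGz.
  by right; split => //; exists z.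
case=> [[z [Xz [Gz Uz]]]|[XG0 [z [Xz Uz]]]].
  by exists z; split => //; split.
by exists z; split => //; split => // /XG0.
Qed.

End effros_trace.

Section aumann_singleton_selection.
Context {R : realType} {V : completeNormedModType R} {d : measure_display}.
Context {T : measurableType d}.
Variable mu : {finite_measure set T -> \bar R}.
Variables (X : T -> set V) (a : V).
Hypothesis aumannX : aumann mu X = [set a].
Variable x : T -> V.
Hypothesis xa : sbochner mu x a.
Hypothesis Xx : {ae mu, forall w, X w (x w)}.

(* Gluing [y] on [A] with [x] off [A] gives another integrable selection,
   whose integral must again be [a]. *)
Lemma aumann_singleton_indic y b : (forall w, X w (y w)) -> sbochner mu y b ->
  forall A, measurable A -> sbochner mu (fun w => (\1_A w : R) *: (y w - x w)) 0.
Proof.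
move=> Xy yb A mA.
have [c1 yA] := sbochner_indic mA yb; have [c2 xA] := sbochner_indic mA xa.
have [c3 xAC] := sbochner_indic (measurableC mA) xa.
have glue := sbochnerD yA xAC.
have : aumann mu X (c1 + c3).
  exists (fun w => (\1_A w : R) *: y w + (\1_(~` A) w : R) *: x w).
    split; first by exists (c1 + c3); exact: sbochner_ae_bochner (aeW _ _) glue.
    by apply: filterS Xx => w Xxw; rewrite scale_indic_setC; case: ifP.
  exact: sbochner_ae_bochner (aeW _ _) glue.
rewrite aumannX /= => c13.
have := sbochnerD xA xAC.
under eq_fun do rewrite scale_indic_setC if_same.
move=> /(sbochner_unique xa) c23.
have c12 : c1 = c2 by apply: (addIr c3); rewrite c13 c23.
have := sbochnerD yA (sbochnerN xA); rewrite c12 subrr.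
by under eq_fun do rewrite -scalerBr.
Qed.

Lemma aumann_singleton_selection_ae (e : nat -> V) : dense_seq e ->
  forall y b, simple_limit y -> (forall w, X w (y w)) -> sbochner mu y b ->
  {ae mu, forall w, y w = x w}.
Proof.
move=> de y b sy Xy yb.
have sxy : simple_limit (fun w => y w - x w) by exact/simple_limitD/simple_limitN/xa.1.
have := ae_eq0_sbochner_indic0 sxy (aumann_singleton_indic Xy yb) de.
by apply: filterS => w /eqP; rewrite subr_eq0 => /eqP.
Qed.

Hypothesis rcsX : random_closed_set X.
Hypothesis ibX : integrably_bounded mu X.
Variable e : nat -> V.
Hypothesis de : dense_seq e.

(* Select in [X w] with preference for the ball [B(c, r)]: the selection is
   integrable, hence equals [x] a.e., so [x w] lies in the closure of [B(c, r)]
   whenever [X w] meets it. *)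
Lemma ae_ball_dist_le (c : V) (r : R) : 0 < r ->
  {ae mu, forall w z, X w z -> ball c r z -> `|c - x w| <= r}.
Proof.
move=> r0; pose Y := trace_or_self X (ball c r).
have Yne w : Y w !=set0 by apply: trace_or_self_neq0; exact: (rcsX.1 w).1.
have mY : effros_measurable Y.
  by apply: effros_measurable_trace_or_self; [exact: ball_open|exact: rcsX.2].
have [y [s [ms cs bs ycl]]] := measurable_selection de Yne mY.
have Xy w : X w (y w) by apply: ycl; [exact: (rcsX.1 w).2|move=> z []].
have yc w : X w `&` ball c r !=set0 -> `|c - y w| <= r.
  move=> XB; suff : closed_ball c r (y w) by rewrite closed_ballE.
  apply: ycl; first exact: closed_ball_closed.
  move=> z [_ /(_ XB) Bz]; rewrite closed_ballE //=.
  by move: Bz; rewrite -ball_normE /= => /ltW.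
have [b yb] : exists b, sbochner mu y b.
  apply: (sbochner_dominated ms cs bs ibX) => w.
  by apply: ereal_sup_ubound; exists (y w).
have sy : simple_limit y by exists s.
apply: filterS (aumann_singleton_selection_ae de sy Xy yb) => w yx z Xz Bz.
by rewrite -yx; apply: yc; exists z.
Qed.

Lemma ae_aumann_singleton_eq : {ae mu, forall w, X w = [set x w]}.
Proof.
pose r k : R := k.+1%:R^-1; have r0 k : 0 < r k by rewrite invr_gt0 ltr0n.
have : {ae mu, forall w j k z, X w z -> ball (e j) (r k) z -> `|e j - x w| <= r k}.
  by apply: ae_foralln => j; apply: ae_foralln => k; exact: ae_ball_dist_le.
apply: filterS2 Xx => w Xxw xB.
apply/seteqP; split => [z Xz|_ ->] //=; apply: contrapT => zx.
have zx0 : 0 < `|z - x w| by rewrite normr_gt0 subr_eq0; apply/eqP.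
have [k rk] := exists_natSinv_lt (divr_gt0 zx0 (ltr0Sn _ 2)).
have [j zj] := de z (r0 k).
have := xB j k z Xz; rewrite -ball_normE /= distrC => /(_ zj) jx.
have := ler_distD (e j) z (x w); rewrite -/(r k) in rk; lra.
Qed.

End aumann_singleton_selection.

Unset Implicit Arguments.
Set Strict Implicit.

Theorem proposition3p2 (R : realType) (V : completeNormedModType R)
  (d : measure_display) (T : measurableType d)
  (mu : {finite_measure set T -> \bar R})
  (X : T -> set V) (a : V) :
  separable_space (V := V) ->
  random_closed_set X -> integrably_bounded mu X ->
  (aumann mu X = [set a] <->
   exists x : T -> V, L1 mu x /\ {ae mu, forall w, X w = [set x w]} /\
     bochner mu x a).
Proof.
move=> sepV rcsX ibX; split; last exact: aumann_ae_singleton.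
move=> aumannX; have [x0 [Lx0 Xx0] x0a] : aumann mu X a by rewrite aumannX.
have [x [x0x xa]] := bochner_ae_sbochner x0a.
have Xx : {ae mu, forall w, X w (x w)}.
  by move: Xx0 x0x; apply: filterS2 => w Xw <-.
have [e de] := separable_dense_seq sepV.
exists x0; split=> //; split=> //.
move: (ae_aumann_singleton_eq aumannX xa Xx rcsX ibX de) x0x.
by apply: filterS2 => w -> ->.
Qed.
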